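(* For every $t \in \mathrm{Lie}(\mathcal{PT})$ and all $\alpha_1,\alpha_2 \in S(\mathcal{PA})$, \[ \rho(t)(\alpha_1\alpha_2)=\rho(t)(\alpha_1)\,\alpha_2+\alpha_1\,\rho(t)(\alpha_2). \]
   Context: Work over a fixed ground field. A planar rooted tree is a finite rooted tree, with edges oriented away from the root, together with a total order on the outgoing edges of each vertex; $\mathcal{PT}$ is the vector space spanned by isomorphism classes of planar rooted trees. $\mathrm{Lie}(\mathcal{PT})$ is the free Lie algebra on $\mathcal{PT}$, with bracket $[\cdot,\cdot]$. For planar trees $t_1,t_2$, the left grafting $t_1 \rhd t_2$ is the sum, over all vertices $v$ of $t_2$, of the planar tree obtained by adding an edge from $v$ to the root of $t_1$ as the leftmost (first) outgoing edge of $v$. It is extended to $\mathrm{Lie}(\mathcal{PT})$ by the rules \[ t_1\rhd[t_2,t_3]=[t_1\rhd t_2,t_3]+[t_2,t_1\rhd t_3], \] \[ [t_1,t_2]\rhd t_3=t_1\rhd(t_2\rhd t_3)-(t_1\rhd t_2)\rhd t_3-t_2\rhd(t_1\rhd t_3)+(t_2\rhd t_1)\rhd t_3. \] A planar aroma is an isomorphism class of finite connected directed graphs (loops allowed) in which every vertex has exactly one incoming edge, together with a total order on the outgoing edges of each vertex. $\mathcal{PA}$ is their span and $S(\mathcal{PA})$ is the symmetric algebra on $\mathcal{PA}$; its monomials are finite multisets of planar aromas. For a planar tree $t$ and a monomial $\alpha \in S(\mathcal{PA})$, $\rho(t)(\alpha)$ is the sum, over all vertices $v$ of all factors of $\alpha$,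 of the monomial obtained by adding an edge from $v$ to the root of $t$ as the leftmost outgoing edge of $v$; this is extended linearly in $\alpha$. For Lie polynomials $\rho$ is defined recursively by \[ \rho([t_1,t_2])(\alpha)=\rho(t_1)(\rho(t_2)(\alpha))-\rho(t_1\rhd t_2)(\alpha)-\rho(t_2)(\rho(t_1)(\alpha))+\rho(t_2\rhd t_1)(\alpha). \] *)

From HB Require Import structures.
From mathcomp Require Import all_boot all_order all_algebra.
Set Implicit Arguments. Unset Strict Implicit. Unset Printing Implicit Defensive.
Import GRing.Theory.
Local Open Scope ring_scope.

(* Planar trees are rigid, so isomorphism classes of planar rooted     *)
(* trees are exactly the elements of this inductive type.              *)
Inductive ptree := PNode of seq ptree.

Fixpoint ptree_enc (t : ptree) : GenTree.tree unit :=
  let: PNode s := t in GenTree.Node 0 (map ptree_enc s).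

Fixpoint ptree_dec (g : GenTree.tree unit) : option ptree :=
  match g with
  | GenTree.Leaf _ => None
  | GenTree.Node _ l => Some (PNode (pmap ptree_dec l))
  end.

Lemma ptree_encK : pcancel ptree_enc ptree_dec.
Proof.
move=> t; move: t; fix IH 1 => -[s] /=; congr (Some (PNode _)).
elim: s => [|u s IHs] //=; by rewrite IH IHs.
Qed.

HB.instance Definition _ := Countable.copy ptree (pcan_type ptree_encK).

Section OnePos.
Variables (X : Type) (f : X -> seq X).
Fixpoint onepos (s : seq X) : seq (seq X) :=
  match s with
  | [::] => [::]
  | x :: s' => [seq y :: s' | y <- f x] ++ [seq x :: s'' | s'' <- onepos s']
  end.
End OnePos.

(* graftT t u : the list (one entry per vertex v of u) of the planar trees
   obtained by adding an edge from v to the root of t as the leftmost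
   outgoing edge of v.  As a formal sum this is t |> u. *)
Fixpoint graftT (t u : ptree) {struct u} : seq ptree :=
  let: PNode s := u in PNode (t :: s) :: map PNode (onepos (graftT t) s).

(* Planar aromas.  A connected graph with exactly one incoming edge    *)
(* per vertex consists of one directed cycle v_0 -> v_1 -> ... -> v_0  *)
(* with planar trees hanging off.  A cycle vertex is encoded by        *)
(* (l, r) : its ordered outgoing edges are the edges to the roots of   *)
(* the trees of l, then the cycle edge to the next cycle vertex, then  *)
(* the edges to the roots of the trees of r.  An aroma is the          *)
(* (nonempty) list of its cycle vertices, read along the cycle, the    *)
(* last one pointing to the first (length 1 = a loop).  Two encodings  *)
(* are isomorphic iff one cycle list is a rotation of the other.       *)
Definition vdata := (seq ptree * seq ptree)%type.
Definition aroma := (vdata * seq vdata)%type.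
Definition cyc (a : aroma) : seq vdata := a.1 :: a.2.

Definition aroma_iso (a b : aroma) : bool :=
  has (fun n => rot n (cyc a) == cyc b) (iota 0 (size (cyc a))).

(* monomials of S(PA): finite multisets of planar aromas, represented
   by lists; two lists are isomorphic iff they agree as multisets of
   isomorphism classes of aromas. *)
Definition mono := seq aroma.
Definition mono_iso (m1 m2 : mono) : bool :=
  all (fun a => count (aroma_iso a) m1 == count (aroma_iso a) m2) (m1 ++ m2).

Definition graft_vd (t : ptree) (d : vdata) : seq vdata :=
  (t :: d.1, d.2) :: [seq (l', d.2) | l' <- onepos (graftT t) d.1]
                  ++ [seq (d.1, r') | r' <- onepos (graftT t) d.2].

Definition graft_ar (t : ptree) (a : aroma) : seq aroma :=
  [seq (d', a.2) | d' <- graft_vd t a.1]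
    ++ [seq (a.1, ds') | ds' <- onepos (graft_vd t) a.2].

Definition graft_mono (t : ptree) (m : mono) : seq mono :=
  onepos (graft_ar t) m.

Section Field.
Variable K : fieldType.

(* Elements of S(PA): formal K-linear combinations of monomials,       *)
(* considered up to the isomorphism of monomials (sa_eq below).        *)
Definition sa := seq (K * mono).
Definition sa_add (v w : sa) : sa := v ++ w.
Definition sa_scale (k : K) (v : sa) : sa := [seq (k * p.1, p.2) | p <- v].
Definition sa_sub (v w : sa) : sa := sa_add v (sa_scale (-1) w).
Definition sa_mul (v w : sa) : sa :=
  [seq (p.1 * q.1, p.2 ++ q.2) | p <- v, q <- w].

Definition sa_coef (v : sa) (m : mono) : K :=
  \sum_(p <- v | mono_iso p.2 m) p.1.
Definition sa_eq (v w : sa) : Prop := forall m, sa_coef v m = sa_coef w m.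

Definition rho_tree (t : ptree) (v : sa) : sa :=
  flatten [seq [seq (p.1, m') | m' <- graft_mono t p.2] | p <- v].

(* Lie(PT): Lie polynomials in planar trees, as syntax (every element  *)
(* of the free Lie algebra Lie(PT) is represented by such a term).     *)
Inductive lterm :=
| LGen of ptree
| LZero
| LAdd of lterm & lterm
| LScale of K & lterm
| LBr of lterm & lterm.

Definition lsub (a b : lterm) := LAdd a (LScale (-1) b).
Definition lsum (s : seq lterm) := foldr LAdd LZero s.

(* a degree used only to bound recursion (every term has degree >= 1,
   degree(a |> b) <= degree a + degree b - 1) *)
Fixpoint ldeg (a : lterm) : nat :=
  match a with
  | LGen _ => 1
  | LZero => 1
  | LAdd a b => maxn (ldeg a) (ldeg b)
  | LScale _ a => ldeg a
  | LBr a b => ldeg a + ldeg b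
  end.

Fixpoint graftTL (t : ptree) (b : lterm) : lterm :=
  match b with
  | LGen u => lsum (map LGen (graftT t u))
  | LZero => LZero
  | LAdd b1 b2 => LAdd (graftTL t b1) (graftTL t b2)
  | LScale k b1 => LScale k (graftTL t b1)
  | LBr b1 b2 => LAdd (LBr (graftTL t b1) b2) (LBr b1 (graftTL t b2))
  end.

(* Recursion on the degree of the left argument via fuel n; the result
   is correct as soon as ldeg a <= n. *)
Fixpoint graft_fuel (n : nat) (a b : lterm) {struct n} : lterm :=
  (fix go (a b : lterm) {struct a} : lterm :=
     match a with
     | LGen t => graftTL t b
     | LZero => LZero
     | LAdd a1 a2 => LAdd (go a1 b) (go a2 b)
     | LScale k a1 => LScale k (go a1 b)
     | LBr a1 a2 =>
         if n is n'.+1 then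
           let g := graft_fuel n' in
           LAdd (lsub (lsub (g a1 (g a2 b)) (g (g a1 a2) b)) (g a2 (g a1 b)))
                (g (g a2 a1) b)
         else LZero
     end) a b.

Definition lgraft (a b : lterm) : lterm := graft_fuel (ldeg a) a b.

(* rho on Lie polynomials, linear in t, with
   rho([a1,a2]) = rho(a1) rho(a2) - rho(a1|>a2) - rho(a2) rho(a1) + rho(a2|>a1).
   Again fuel n, correct as soon as ldeg a <= n. *)
Fixpoint rho_fuel (n : nat) (a : lterm) (v : sa) {struct n} : sa :=
  (fix go (a : lterm) (v : sa) {struct a} : sa :=
     match a with
     | LGen t => rho_tree t v
     | LZero => [::]
     | LAdd a1 a2 => sa_add (go a1 v) (go a2 v)
     | LScale k a1 => sa_scale k (go a1 v)
     | LBr a1 a2 =>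
         if n is n'.+1 then
           let r := rho_fuel n' in
           sa_add (sa_sub (sa_sub (r a1 (r a2 v)) (r (lgraft a1 a2) v))
                          (r a2 (r a1 v)))
                  (r (lgraft a2 a1) v)
         else [::]
     end) a v.

Definition rho (a : lterm) (v : sa) : sa := rho_fuel (ldeg a) a v.

End Field.

(* Pair a formal sum v = sum_i k_i m_i with an arbitrary weight F on
   monomials, <v, F> = sum_i k_i F(m_i); coefficients of isomorphism classes
   are special weights.  Call f adjointable if <f v, F> = <v, f^T F> for some
   f^T, and a derivation if <f (v w), F> = <f v * w + v * f w, F> for all F;
   adjointability lets f be applied to both sides of such an identity.
   For a tree t, rho(t) grafts onto a vertex of exactly one factor of a
   monomial, so it is an adjointable derivation.  Adjointable derivations are
   closed under sums and scalings, and for any four of them f1, f2, h1, h2 the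
   map f1 f2 - h1 - f2 f1 + h2 is again one: in f1 f2 - f2 f1 the cross terms
   of the Leibniz rule cancel. *)
From mathcomp Require Import all_boot all_order all_algebra.
From mathcomp Require Import ring.
Set Implicit Arguments. Unset Strict Implicit. Unset Printing Implicit Defensive.
Import GRing.Theory.
Local Open Scope ring_scope.

Lemma onepos_cat (X : Type) (f : X -> seq X) (s1 s2 : seq X) :
  onepos f (s1 ++ s2) =
  [seq y ++ s2 | y <- onepos f s1] ++ [seq s1 ++ y | y <- onepos f s2].
Proof.
elim: s1 => [|x s1 IH] /=; first by rewrite map_id.
by rewrite IH !map_cat -!map_comp catA.
Qed.

Section Derivations.
Variable K : fieldType.
Implicit Types (v w x y : sa K) (F G : mono -> K) (f g : sa K -> sa K).

Definition sa_pair v F : K := \sum_(p <- v) p.1 * F p.2.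

Lemma sa_pair0 F : sa_pair [::] F = 0.
Proof. by rewrite /sa_pair big_nil. Qed.

Lemma sa_pairD v w F : sa_pair (sa_add v w) F = sa_pair v F + sa_pair w F.
Proof. by rewrite /sa_pair big_cat. Qed.

Lemma sa_pairZ k v F : sa_pair (sa_scale k v) F = k * sa_pair v F.
Proof.
rewrite /sa_pair big_map big_distrr.
by apply: eq_bigr => p _; rewrite /= mulrA.
Qed.

Lemma sa_pairB v w F : sa_pair (sa_sub v w) F = sa_pair v F - sa_pair w F.
Proof. by rewrite sa_pairD sa_pairZ mulN1r. Qed.

Lemma sa_pairF0 v : sa_pair v (fun=> 0) = 0.
Proof. by rewrite /sa_pair big1 // => p _; rewrite mulr0. Qed.

Lemma sa_pairFD v F G :
  sa_pair v (fun m => F m + G m) = sa_pair v F + sa_pair v G.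
Proof.
by rewrite /sa_pair -big_split; apply: eq_bigr => p _; rewrite mulrDr.
Qed.

Lemma sa_pairFZ v k F : sa_pair v (fun m => k * F m) = k * sa_pair v F.
Proof.
rewrite /sa_pair big_distrr; apply: eq_bigr => p _.
by rewrite mulrCA.
Qed.

Lemma sa_pair_mull v w F :
  sa_pair (sa_mul v w) F =
  sa_pair v (fun m => \sum_(q <- w) q.1 * F (m ++ q.2)).
Proof.
rewrite /sa_pair big_allpairs_dep; apply: eq_bigr => p _.
by rewrite big_distrr; apply: eq_bigr => q _; rewrite /= mulrA.
Qed.

Lemma sa_pair_mulr v w F :
  sa_pair (sa_mul v w) F =
  sa_pair w (fun m => \sum_(p <- v) p.1 * F (p.2 ++ m)).
Proof.
rewrite sa_pair_mull /sa_pair.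
under eq_bigr do rewrite big_distrr.
rewrite exchange_big; apply: eq_bigr => q _; rewrite big_distrr.
by apply: eq_bigr => p _; rewrite /= mulrCA.
Qed.

Lemma sa_pair_mulDl x y w F :
  sa_pair (sa_mul (sa_add x y) w) F =
  sa_pair (sa_mul x w) F + sa_pair (sa_mul y w) F.
Proof. by rewrite !sa_pair_mull sa_pairD. Qed.

Lemma sa_pair_mulDr x y w F :
  sa_pair (sa_mul w (sa_add x y)) F =
  sa_pair (sa_mul w x) F + sa_pair (sa_mul w y) F.
Proof. by rewrite !sa_pair_mulr sa_pairD. Qed.

Lemma sa_pair_mulZl k x w F :
  sa_pair (sa_mul (sa_scale k x) w) F = k * sa_pair (sa_mul x w) F.
Proof. by rewrite !sa_pair_mull sa_pairZ. Qed.

Lemma sa_pair_mulZr k x w F :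
  sa_pair (sa_mul w (sa_scale k x)) F = k * sa_pair (sa_mul w x) F.
Proof. by rewrite !sa_pair_mulr sa_pairZ. Qed.

Lemma sa_pair_mulBl x y w F :
  sa_pair (sa_mul (sa_sub x y) w) F =
  sa_pair (sa_mul x w) F - sa_pair (sa_mul y w) F.
Proof. by rewrite sa_pair_mulDl sa_pair_mulZl mulN1r. Qed.

Lemma sa_pair_mulBr x y w F :
  sa_pair (sa_mul w (sa_sub x y)) F =
  sa_pair (sa_mul w x) F - sa_pair (sa_mul w y) F.
Proof. by rewrite sa_pair_mulDr sa_pair_mulZr mulN1r. Qed.

Lemma sa_coefE v m :
  sa_coef v m = sa_pair v (fun m' => if mono_iso m' m then 1 else 0).
Proof.
rewrite /sa_coef /sa_pair big_mkcond; apply: eq_bigr => p _.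
by case: ifP; rewrite ?mulr1 ?mulr0.
Qed.

Definition adjointable f :=
  exists fT : (mono -> K) -> mono -> K,
    forall v F, sa_pair (f v) F = sa_pair v (fT F).

Definition derivation f :=
  forall v w F, sa_pair (f (sa_mul v w)) F =
                sa_pair (sa_mul (f v) w) F + sa_pair (sa_mul v (f w)) F.

Definition adj_derivation f := adjointable f /\ derivation f.

Lemma adjointable_congr f x y F : adjointable f ->
  (forall G, sa_pair x G = sa_pair y G) -> sa_pair (f x) F = sa_pair (f y) F.
Proof. by move=> [fT HfT] xy; rewrite !HfT xy. Qed.

Lemma adjointableD f x y F : adjointable f ->
  sa_pair (f (sa_add x y)) F = sa_pair (f x) F + sa_pair (f y) F.
Proof. by move=> [fT HfT]; rewrite !HfT sa_pairD. Qed.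

Lemma adj_derivation_ext f g :
  f =1 g -> adj_derivation g -> adj_derivation f.
Proof.
move=> fg [[gT HgT] Dg]; split; last by move=> v w F; rewrite !fg Dg.
by exists gT => v F; rewrite fg HgT.
Qed.

Lemma adj_derivation0 : adj_derivation (fun=> [::]).
Proof.
split; first by exists (fun _ _ => 0) => v F; rewrite sa_pair0 sa_pairF0.
by move=> v w F /=; rewrite !sa_pair0 sa_pair_mulr sa_pair0 addr0.
Qed.

Lemma adj_derivationD f g : adj_derivation f -> adj_derivation g ->
  adj_derivation (fun v => sa_add (f v) (g v)).
Proof.
move=> [[fT HfT] Df] [[gT HgT] Dg]; split.
  exists (fun F m => fT F m + gT F m) => v F.
  by rewrite sa_pairD HfT HgT sa_pairFD.
move=> v w F; rewrite sa_pairD Df Dg sa_pair_mulDl sa_pair_mulDr; ring.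
Qed.

Lemma adj_derivationZ k f : adj_derivation f ->
  adj_derivation (fun v => sa_scale k (f v)).
Proof.
move=> [[fT HfT] Df]; split.
  by exists (fun F m => k * fT F m) => v F; rewrite sa_pairZ HfT sa_pairFZ.
move=> v w F; rewrite sa_pairZ Df sa_pair_mulZl sa_pair_mulZr; ring.
Qed.

Lemma adj_derivation_comp_mul f g :
  adj_derivation f -> adj_derivation g -> forall v w F,
  sa_pair (f (g (sa_mul v w))) F =
    sa_pair (sa_mul (f (g v)) w) F + sa_pair (sa_mul (g v) (f w)) F
  + sa_pair (sa_mul (f v) (g w)) F + sa_pair (sa_mul v (f (g w))) F.
Proof.
move=> [Af Df] [_ Dg] v w F.
have g_mul G : sa_pair (g (sa_mul v w)) G =
               sa_pair (sa_add (sa_mul (g v) w) (sa_mul v (g w))) G.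
  by rewrite Dg sa_pairD.
by rewrite (adjointable_congr F Af g_mul) adjointableD // !Df; ring.
Qed.

Lemma adj_derivation_bracket f1 f2 h1 h2 :
  adj_derivation f1 -> adj_derivation f2 ->
  adj_derivation h1 -> adj_derivation h2 ->
  adj_derivation
    (fun v => sa_add (sa_sub (sa_sub (f1 (f2 v)) (h1 v)) (f2 (f1 v))) (h2 v)).
Proof.
move=> f1D f2D [[h1T Hh1] Dh1] [[h2T Hh2] Dh2].
have [[f1T Hf1] _] := f1D; have [[f2T Hf2] _] := f2D.
split.
  exists (fun F m => f2T (f1T F) m - h1T F m - f1T (f2T F) m + h2T F m).
  move=> v F; rewrite sa_pairD !sa_pairB Hf1 Hf2 Hh1 Hh2 Hf2 Hf1.
  by rewrite /sa_pair -!sumrB -big_split; apply: eq_bigr => p _ /=; ring.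
move=> v w F.
rewrite sa_pairD !sa_pairB (adj_derivation_comp_mul f1D f2D).
rewrite (adj_derivation_comp_mul f2D f1D) Dh1 Dh2.
rewrite sa_pair_mulDl !sa_pair_mulBl sa_pair_mulDr !sa_pair_mulBr; ring.
Qed.

Definition graft_sum (t : ptree) F (m : mono) : K :=
  \sum_(m' <- graft_mono t m) F m'.

Lemma sa_pair_rho_tree t v F :
  sa_pair (rho_tree t v) F = sa_pair v (graft_sum t F).
Proof.
rewrite /sa_pair /rho_tree big_flatten big_map; apply: eq_bigr => p _.
by rewrite big_map big_distrr.
Qed.

Lemma graft_sum_cat t F m1 m2 :
  graft_sum t F (m1 ++ m2) =
    \sum_(m' <- graft_mono t m1) F (m' ++ m2)
  + \sum_(m' <- graft_mono t m2) F (m1 ++ m').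
Proof. by rewrite /graft_sum /graft_mono onepos_cat big_cat !big_map. Qed.

Lemma adj_derivation_rho_tree t : adj_derivation (rho_tree t).
Proof.
split; first by exists (graft_sum t) => v F; apply: sa_pair_rho_tree.
move=> v w F; rewrite !sa_pair_rho_tree !sa_pair_mull sa_pair_rho_tree.
rewrite -sa_pairFD /sa_pair; apply: eq_bigr => p _; congr (_ * _).
under eq_bigr do rewrite graft_sum_cat mulrDr.
rewrite big_split /=; congr (_ + _).
  by rewrite /graft_sum exchange_big; apply: eq_bigr => q _; rewrite big_distrr.
exact: esym (sa_pair_rho_tree t w (fun m' => F (p.2 ++ m'))).
Qed.

(* The fuel only truncates brackets to 0, which is still a derivation. *)
Lemma adj_derivation_rho_fuel n a : adj_derivation (rho_fuel n a).
Proof.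
elim: n a => [|n IHn]; elim=> [t||a1 IH1 a2 IH2|k a1 IH1|a1 _ a2 _] /=;
  try solve [ exact: adj_derivation_rho_tree | exact: adj_derivation0
            | exact: adj_derivation_ext (adj_derivationD IH1 IH2)
            | exact: adj_derivation_ext (adj_derivationZ k IH1) ].
exact: adj_derivation_bracket (IHn a1) (IHn a2)
  (IHn (lgraft a1 a2)) (IHn (lgraft a2 a1)).
Qed.

End Derivations.

Theorem mainTheorem1 (K : fieldType) (t : lterm K) (a1 a2 : sa K) :
  sa_eq (rho t (sa_mul a1 a2))
        (sa_add (sa_mul (rho t a1) a2) (sa_mul a1 (rho t a2))).
Proof.
have [_ rho_der] := adj_derivation_rho_fuel (ldeg t) t.
by move=> m; rewrite !sa_coefE sa_pairD rho_der.
Qed.
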